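(* Let $\mathcal{C}_i\in\mathbb{R}^{n_{1i}\times n_{2i}\times d_i}$ and let $\Phi_{\theta_i}:\mathbb{R}\to\mathbb{R}^{d_i}$ be an $L$-layer multilayer perceptron with weight matrices $\mathbf{W}_1,\dots,\mathbf{W}_L$ and activation function $\sigma:\mathbb{R}\to\mathbb{R}$ (applied entrywise) that is Lipschitz continuous with Lipschitz constant $L_\sigma$. Define $\widetilde{\mathbf{G}}_i(p)=\mathcal{C}_i\times_3\Phi_{\theta_i}(p)$. Assume $\|\mathcal{C}_i\|_1\le\kappa$ and $\|\mathbf{W}_\ell\|_1\le\eta$ for every $\ell=1,\dots,L$. Then for all $p_1,p_2\in\mathbb{R}$, $$\|\widetilde{\mathbf{G}}_i(p_1)-\widetilde{\mathbf{G}}_i(p_2)\|_F\le\kappa\,(L_\sigma\eta)^L\,|p_1-p_2|.$$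
   Context: The $L$-layer MLP is $\mathbf{h}^{(0)}=p\in\mathbb{R}$, $\mathbf{h}^{(\ell)}=\sigma(\mathbf{W}_\ell\mathbf{h}^{(\ell-1)}+\mathbf{b}_\ell)$ for $\ell=1,\dots,L$ (with bias vectors $\mathbf{b}_\ell$, possibly zero), and $\Phi_{\theta_i}(p)=\mathbf{h}^{(L)}\in\mathbb{R}^{d_i}$; the weight matrices have compatible sizes with $\mathbf{W}_1$ having one column and $\mathbf{W}_L$ having $d_i$ rows. For a matrix or tensor, $\|\cdot\|_1$ denotes the entrywise $\ell_1$ norm (sum of absolute values of all entries), and $\|\cdot\|_F$ the Frobenius norm. For $\mathcal{C}\in\mathbb{R}^{n_1\times n_2\times d}$ and $\mathbf{x}\in\mathbb{R}^d$, $\mathcal{C}\times_3\mathbf{x}:=\sum_{\ell=1}^d x_\ell\,\mathcal{C}(:,:,\ell)\in\mathbb{R}^{n_1\times n_2}$. *)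

From mathcomp Require Import all_boot all_order all_algebra.
From mathcomp Require Import reals.
Set Implicit Arguments. Unset Strict Implicit. Unset Printing Implicit Defensive.
Import Order.TTheory GRing.Theory Num.Theory.
Local Open Scope ring_scope.

(* Hidden layers of an MLP with layer widths w (w 0 = 1 is the scalar input,
   w L = d the output dimension), weights W l : 'M_(w l.+1, w l) (this is the
   paper's W_{l+1}) and biases b l : 'cV_(w l.+1) (the paper's b_{l+1}).
   h 0 = p (as a column vector; w 0 = 1 is assumed in the theorem),
   h (l+1) = sigma entrywise (W l *m h l + b l). *)
Fixpoint mlp_hidden (R : ringType) (w : nat -> nat) (sigma : R -> R)
  (W : forall l : nat, 'M[R]_(w l.+1, w l)) (b : forall l : nat, 'cV[R]_(w l.+1))
  (p : R) (l : nat) : 'cV[R]_(w l) :=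
  match l with
  | 0 => const_mx p
  | l'.+1 => map_mx sigma (W l' *m mlp_hidden sigma W b p l' + b l')
  end.

Definition mx_l1 (R : numDomainType) m n (A : 'M[R]_(m, n)) : R :=
  \sum_(i < m) \sum_(j < n) `|A i j|.

Definition mx_frob (R : rcfType) m n (A : 'M[R]_(m, n)) : R :=
  Num.sqrt (\sum_(i < m) \sum_(j < n) (A i j) ^+ 2).

Definition tensor_l1 (R : numDomainType) n1 n2 d (C : 'I_n1 -> 'I_n2 -> 'I_d -> R) : R :=
  \sum_(i < n1) \sum_(j < n2) \sum_(k < d) `|C i j k|.

Definition mode3 (R : ringType) n1 n2 d (C : 'I_n1 -> 'I_n2 -> 'I_d -> R)
  (x : 'cV[R]_d) : 'M[R]_(n1, n2) :=
  \matrix_(i < n1, j < n2) \sum_(k < d) x k ord0 * C i j k.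

(* Every hidden layer is Lipschitz in the sup norm over its entries: the
   affine map x |-> W x + b scales differences by at most the entrywise l1
   norm of W, and sigma by at most L_sigma, so after L layers entries differ by
   at most (L_sigma eta)^L |p1 - p2|.  The mode-3 product is linear in its
   vector argument with entrywise l1 gain ||C||_1, and the Frobenius norm is
   dominated by the entrywise l1 norm. *)
From mathcomp Require Import all_boot all_order all_algebra.
From mathcomp Require Import reals.
Set Implicit Arguments. Unset Strict Implicit. Unset Printing Implicit Defensive.
Import Order.TTheory GRing.Theory Num.Theory.
Local Open Scope ring_scope.

Lemma lipschitz_const_ge0 (R : numDomainType) (f : R -> R) (k : R) :
  (forall x y, `|f x - f y| <= k * `|x - y|) -> 0 <= k.
Proof.
move=> f_lip; have := f_lip 1 0.
by rewrite subr0 normr1 mulr1; apply: le_trans.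
Qed.

Lemma mx_l1_ge0 (R : numDomainType) m n (A : 'M[R]_(m, n)) : 0 <= mx_l1 A.
Proof. by apply: sumr_ge0 => i _; apply: sumr_ge0. Qed.

Lemma sum_sqr_le_sqr_sum (R : numDomainType) (I : finType) (a : I -> R) :
  (forall i, 0 <= a i) -> \sum_i a i ^+ 2 <= (\sum_i a i) ^+ 2.
Proof.
move=> a_ge0; rewrite [X in _ <= X]expr2 mulr_suml; apply: ler_sum => i _.
rewrite expr2 ler_wpM2l // (bigD1 i) //= lerDl.
by apply: sumr_ge0.
Qed.

Lemma mx_frob_le_l1 (R : rcfType) m n (A : 'M[R]_(m, n)) : mx_frob A <= mx_l1 A.
Proof.
rewrite /mx_frob -(ger0_norm (mx_l1_ge0 A)) -sqrtr_sqr ler_sqrt ?sqr_ge0 //.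
apply: le_trans (sum_sqr_le_sqr_sum (fun i => sumr_ge0 _ _)) => //.
apply: ler_sum => i _; apply: le_trans (sum_sqr_le_sqr_sum _) => //.
by apply: ler_sum => j _; rewrite real_normK ?num_real.
Qed.

Lemma norm_mulmx_le_l1 (R : numDomainType) m n p
    (A : 'M[R]_(m, n)) (x : 'M[R]_(n, p)) (M : R) :
  0 <= M -> (forall j k, `|x j k| <= M) ->
  forall i k, `|(A *m x) i k| <= mx_l1 A * M.
Proof.
move=> M_ge0 x_le i k; rewrite mxE.
apply: le_trans (ler_norm_sum _ _ _) _.
apply: (@le_trans _ _ (\sum_j `|A i j| * M)).
  by apply: ler_sum => j _; rewrite normrM ler_wpM2l.
rewrite -mulr_suml ler_wpM2r // /mx_l1 (bigD1 i) //= lerDl.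
by apply: sumr_ge0 => *; apply: sumr_ge0.
Qed.

Lemma mode3B (R : nzRingType) n1 n2 d (C : 'I_n1 -> 'I_n2 -> 'I_d -> R)
    (x y : 'cV[R]_d) :
  mode3 C x - mode3 C y = mode3 C (x - y).
Proof.
by apply/matrixP => i j; rewrite !mxE -sumrB; apply: eq_bigr => k _; rewrite !mxE mulrBl.
Qed.

Lemma mx_l1_mode3_le (R : numDomainType) n1 n2 d
    (C : 'I_n1 -> 'I_n2 -> 'I_d -> R) (x : 'cV[R]_d) (M : R) :
  (forall k, `|x k ord0| <= M) -> mx_l1 (mode3 C x) <= tensor_l1 C * M.
Proof.
move=> x_le; rewrite /tensor_l1 mulr_suml; apply: ler_sum => i _.
rewrite mulr_suml; apply: ler_sum => j _; rewrite mulr_suml mxE.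
apply: le_trans (ler_norm_sum _ _ _) _.
by apply: ler_sum => k _; rewrite normrM mulrC ler_wpM2l.
Qed.

Section MLPLipschitz.

Variables (R : numDomainType) (w : nat -> nat) (sigma : R -> R).
Variables (W : forall l : nat, 'M[R]_(w l.+1, w l)) (b : forall l : nat, 'cV[R]_(w l.+1)).
Variables (Lsigma eta : R) (L : nat).

Hypothesis sigma_lipschitz : forall x y, `|sigma x - sigma y| <= Lsigma * `|x - y|.
Hypothesis W_l1_le : forall l, (l < L)%N -> mx_l1 (W l) <= eta.

Lemma mlp_hiddenS (p : R) (l : nat) :
  mlp_hidden sigma W b p l.+1 = map_mx sigma (W l *m mlp_hidden sigma W b p l + b l).
Proof. by []. Qed.

Lemma mlp_hidden_lipschitz (p1 p2 : R) (l : nat) :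
  (l <= L)%N -> forall i,
  `|mlp_hidden sigma W b p1 l i ord0 - mlp_hidden sigma W b p2 l i ord0|
    <= (Lsigma * eta) ^+ l * `|p1 - p2|.
Proof.
elim: l => [|l IHl] lt_lL i; first by rewrite !mxE expr0 mul1r.
rewrite !mlp_hiddenS; set h := mlp_hidden sigma W b.
have Ls_ge0 := lipschitz_const_ge0 sigma_lipschitz.
have eta_ge0 : 0 <= eta := le_trans (mx_l1_ge0 (W l)) (W_l1_le lt_lL).
have M_ge0 : 0 <= (Lsigma * eta) ^+ l * `|p1 - p2|.
  by rewrite mulr_ge0 ?exprn_ge0 ?mulr_ge0.
have affineB : (W l *m h p1 l + b l) - (W l *m h p2 l + b l) = W l *m (h p1 l - h p2 l).
  by rewrite opprD addrACA subrr addr0 mulmxBr.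
have entryB n (x y : 'cV[R]_n) j : x j ord0 - y j ord0 = (x - y) j ord0.
  by rewrite !mxE.
rewrite [map_mx _ _ i _]mxE [map_mx _ _ i _]mxE.
apply: le_trans (sigma_lipschitz _ _) _.
rewrite entryB affineB exprS -!mulrA ler_wpM2l //.
apply: le_trans (norm_mulmx_le_l1 (W l) M_ge0 _ i ord0) _; last first.
  by rewrite ler_wpM2r // W_l1_le.
by move=> j k; rewrite (ord1 k) -entryB; apply: IHl; apply: ltnW.
Qed.

End MLPLipschitz.

Theorem theorem2 (R : realType) (L : nat) (w : nat -> nat) (n1 n2 : nat)
  (C : 'I_n1 -> 'I_n2 -> 'I_(w L) -> R)
  (W : forall l : nat, 'M[R]_(w l.+1, w l)) (b : forall l : nat, 'cV[R]_(w l.+1))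
  (sigma : R -> R) (Lsigma kappa eta : R) :
  w 0%N = 1%N ->
  (forall x y : R, `|sigma x - sigma y| <= Lsigma * `|x - y|) ->
  tensor_l1 C <= kappa ->
  (forall l : nat, (l < L)%N -> mx_l1 (W l) <= eta) ->
  forall p1 p2 : R,
    mx_frob (mode3 C (mlp_hidden sigma W b p1 L) - mode3 C (mlp_hidden sigma W b p2 L))
    <= kappa * (Lsigma * eta) ^+ L * `|p1 - p2|.
Proof.
move=> _ sigma_lip C_le W_le p1 p2.
have Ls_ge0 := lipschitz_const_ge0 sigma_lip.
have gain_ge0 : 0 <= (Lsigma * eta) ^+ L.
  have [->|L_gt0] := posnP L; first by rewrite expr0.
  by rewrite exprn_ge0 ?mulr_ge0 // (le_trans (mx_l1_ge0 (W 0%N))) ?W_le.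
set M := (Lsigma * eta) ^+ L * `|p1 - p2|.
have hidden_le k :
    `|(mlp_hidden sigma W b p1 L - mlp_hidden sigma W b p2 L) k ord0| <= M.
  by rewrite !mxE; apply: (mlp_hidden_lipschitz b sigma_lip W_le).
rewrite mode3B -mulrA; apply: le_trans (mx_frob_le_l1 _) _.
apply: le_trans; first exact: mx_l1_mode3_le hidden_le.
by rewrite ler_wpM2r ?mulr_ge0.
Qed.
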